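(* For every $\alpha\in(0,1)$, \[ \sum_{t=1}^\infty\Big(1-\frac{1}{t^\alpha}\Big)^t\ \le\ \frac{1}{1-\alpha}\,\Gamma\Big(\frac{1}{1-\alpha}\Big). \]
   Context: $\Gamma(z)=\int_0^\infty t^{z-1}e^{-t}\,dt$ is the Gamma function. *)

From Stdlib Require Import Reals.
From Coquelicot Require Import Coquelicot.
Open Scope R_scope.

Definition Gamma (s : R) : R :=
  RInt_gen (fun t => Rpower t (s - 1) * exp (- t))
           (at_right 0) (Rbar_locally p_infty).

Definition term (alpha : R) (t : nat) : R :=
  (1 - 1 / Rpower (INR t) alpha) ^ t.

From Stdlib Require Import Reals Lra Lia Classical.
From Coquelicot Require Import Coquelicot.
Open Scope R_scope.

(* Put beta = 1 - alpha and s = 1 / beta.  Since 1 - y <= exp (- y), the t-th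
   term is at most exp (- t^beta).  On [t^beta, (t+1)^beta] the function
   u^s increases by exactly 1 with derivative s u^(s-1), while
   exp (- u) >= exp (- (t+1)^beta); hence
   exp (- (t+1)^beta) <= s \int_{t^beta}^{(t+1)^beta} u^(s-1) exp (- u) du,
   and, the term t = 1 being 0, the partial sums are bounded by
   s \int_1^oo u^(s-1) exp (- u) du.
   The improper integral defining Gamma(s) exists because its integrand is
   nonnegative and u^(s-1) <= C exp (u / 2). *)

Lemma exp_le_exp (x y : R) : x <= y -> exp x <= exp y.
Proof.
  intros [Hlt | ->]; [now left; apply exp_increasing | now right].
Qed.

Lemma Rpower_1_l (y : R) : Rpower 1 y = 1.
Proof. unfold Rpower. now rewrite ln_1, Rmult_0_r, exp_0. Qed.

Lemma one_le_Rpower (x y : R) : 1 <= x -> 0 <= y -> 1 <= Rpower x y.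
Proof.
  intros Hx Hy. rewrite <- (Rpower_O x) by lra. now apply Rle_Rpower.
Qed.

Lemma Rpower_le_exp_half (c u : R) : 0 < c -> 0 < u ->
  Rpower u c <= exp (c * (ln (2 * c) - 1)) * exp (u / 2).
Proof.
  intros Hc Hu.
  assert (Hln : ln (u / (2 * c)) <= u / (2 * c) - 1).
  { assert (Hpos : 0 < u / (2 * c)) by (apply Rdiv_lt_0_compat; lra).
    pose proof (exp_ineq1_le (ln (u / (2 * c)))) as H.
    rewrite exp_ln in H by exact Hpos. lra. }
  unfold Rdiv in Hln. rewrite ln_mult, ln_Rinv in Hln by (try apply Rinv_0_lt_compat; lra).
  assert (Hscaled : c * (ln u - ln (2 * c)) <= c * (u * / (2 * c) - 1))
    by (apply Rmult_le_compat_l; lra).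
  replace (c * (u * / (2 * c) - 1)) with (u / 2 - c) in Hscaled by (field; lra).
  unfold Rpower. rewrite <- exp_plus. apply exp_le_exp. lra.
Qed.

Lemma nonneg_bounded_is_series (a : nat -> R) (M : R) :
  (forall n, 0 <= a n) -> (forall n, sum_n a n <= M) ->
  ex_series a /\ Series a <= M.
Proof.
  intros Hpos HM.
  assert (Hincr : forall n, sum_n a n <= sum_n a (S n)).
  { intros n. rewrite sum_Sn. change (plus ?u ?v) with (u + v). specialize (Hpos (S n)). lra. }
  destruct (ex_finite_lim_seq_incr _ M Hincr HM) as [l Hl].
  split; [now exists l |].
  rewrite (is_series_unique a l Hl).
  exact (is_lim_seq_le _ _ _ _ HM Hl (is_lim_seq_const M)).
Qed.

Lemma RInt_le_RInt_superinterval (f : R -> R) (x a b y : R) :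
  x <= a -> a <= b -> b <= y -> ex_RInt f x y ->
  (forall z, x < z < y -> 0 <= f z) -> RInt f a b <= RInt f x y.
Proof.
  intros Hxa Hab Hby Hex Hpos.
  assert (Hxb : ex_RInt f x b) by (apply (ex_RInt_Chasles_1 f x b y); [lra | exact Hex]).
  assert (Hby' : ex_RInt f b y) by (apply (ex_RInt_Chasles_2 f x b y); [lra | exact Hex]).
  assert (Hxa' : ex_RInt f x a) by (apply (ex_RInt_Chasles_1 f x a b); [lra | exact Hxb]).
  assert (Hab' : ex_RInt f a b) by (apply (ex_RInt_Chasles_2 f x a b); [lra | exact Hxb]).
  rewrite <- (RInt_Chasles f x b y Hxb Hby'), <- (RInt_Chasles f x a b Hxa' Hab').
  assert (0 <= RInt f x a) by (apply RInt_ge_0; auto; intros z Hz; apply Hpos; lra).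
  assert (0 <= RInt f b y) by (apply RInt_ge_0; auto; intros z Hz; apply Hpos; lra).
  repeat change (plus ?u ?v) with (u + v). lra.
Qed.

(* The improper integral is the supremum of the integrals over compact
   subintervals of (0, +oo). *)
Lemma nonneg_bounded_is_RInt_gen (f : R -> R) (M : R) :
  (forall x, 0 < x -> 0 <= f x) ->
  (forall a b, 0 < a -> a <= b -> ex_RInt f a b) ->
  (forall a b, 0 < a -> a <= b -> RInt f a b <= M) ->
  exists l, is_RInt_gen f (at_right 0) (Rbar_locally p_infty) l /\
    (forall a b, 0 < a -> a <= b -> RInt f a b <= l).
Proof.
  intros Hpos Hex HM.
  set (E := fun y => exists a b, 0 < a /\ a <= b /\ y = RInt f a b).
  destruct (completeness E) as [l [Hub Hlub]].
  { exists M. intros y (a & b & Ha & Hab & ->). auto. }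
  { exists (RInt f 1 1), 1, 1. repeat split; lra. }
  assert (Hle : forall a b, 0 < a -> a <= b -> RInt f a b <= l).
  { intros a b Ha Hab. apply Hub. now exists a, b. }
  exists l. split; [| exact Hle].
  intros P [eps HP].
  assert (Happrox : exists a0 b0, 0 < a0 /\ a0 <= b0 /\ l - eps < RInt f a0 b0).
  { apply NNPP. intros Hn.
    assert (l <= l - eps).
    { apply Hlub. intros y (a & b & Ha & Hab & ->).
      apply Rnot_lt_le. intros Hc. apply Hn. now exists a, b. }
    destruct eps; simpl in *; lra. }
  destruct Happrox as (a0 & b0 & Ha0 & Hab0 & Hl0).
  apply (Filter_prod _ _ _ (fun a => 0 < a < a0) (fun b => b0 < b)).
  - exists (mkposreal a0 Ha0). intros y Hy Hy0.
    unfold ball in Hy; simpl in Hy; unfold AbsRing_ball, abs, minus, plus, opp in Hy; simpl in Hy.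
    rewrite Ropp_0, Rplus_0_r in Hy. apply Rabs_def2 in Hy. lra.
  - now exists b0.
  - intros x y Hx Hy. simpl. exists (RInt f x y). split.
    + apply (@RInt_correct R_CompleteNormedModule). apply Hex; lra.
    + apply HP. unfold ball; simpl; unfold AbsRing_ball, abs, minus, plus, opp; simpl.
      pose proof (cond_pos eps). apply Rabs_def1.
      * assert (RInt f x y <= l) by (apply Hle; lra). lra.
      * assert (RInt f a0 b0 <= RInt f x y).
        { apply RInt_le_RInt_superinterval; [lra | lra | lra | apply Hex; lra |].
          intros z Hz. apply Hpos. lra. }
        lra.
Qed.

Definition gamma_integrand (s u : R) : R := Rpower u (s - 1) * exp (- u).

Lemma gamma_integrand_nonneg (s u : R) : 0 <= gamma_integrand s u.
Proof.
  unfold gamma_integrand, Rpower.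
  apply Rmult_le_pos; left; apply exp_pos.
Qed.

Lemma continuous_Rpower (c u : R) : 0 < u -> continuous (fun x => Rpower x c) u.
Proof.
  intros Hu. apply continuity_pt_filterlim, derivable_continuous_pt.
  exact (exist _ _ (derivable_pt_lim_power u c Hu)).
Qed.

Lemma continuous_gamma_integrand (s u : R) : 0 < u -> continuous (gamma_integrand s) u.
Proof.
  intros Hu. apply (continuous_mult (fun x => Rpower x (s - 1)) (fun x => exp (- x))).
  - now apply continuous_Rpower.
  - apply continuity_pt_filterlim, derivable_continuous_pt.
    apply derivable_pt_comp; [apply derivable_pt_opp, derivable_pt_id | apply derivable_pt_exp].
Qed.

Lemma ex_RInt_gamma_integrand (s a b : R) : 0 < a -> a <= b ->
  ex_RInt (gamma_integrand s) a b.
Proof.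
  intros Ha Hab. apply (@ex_RInt_continuous R_CompleteNormedModule). intros z Hz.
  rewrite Rmin_left in Hz by lra. apply continuous_gamma_integrand. lra.
Qed.

Lemma RInt_gamma_integrand_bounded (s a b : R) : 1 < s -> 0 < a -> a <= b ->
  RInt (gamma_integrand s) a b <= 2 * exp ((s - 1) * (ln (2 * (s - 1)) - 1)).
Proof.
  intros Hs Ha Hab. set (K := exp ((s - 1) * (ln (2 * (s - 1)) - 1))).
  assert (HK : 0 < K) by apply exp_pos.
  assert (Hprim : is_RInt (fun x => K * exp (- x / 2)) a b
                    (-2 * K * exp (- b / 2) - -2 * K * exp (- a / 2))).
  { apply (@is_RInt_derive R_CompleteNormedModule (fun x => -2 * K * exp (- x / 2))).
    - intros x _. auto_derive; [easy |].
      change (-2 * K * (- (1) * / 2 * exp (- x * / 2)) = K * exp (- x * / 2)); field.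
    - intros x _. apply (continuous_mult (fun _ => K) (fun x => exp (- x / 2))).
      + apply continuous_const.
      + apply (@ex_derive_continuous R_AbsRing R_NormedModule). auto_derive. easy. }
  apply Rle_trans with (RInt (fun x => K * exp (- x / 2)) a b).
  - apply RInt_le;
      [exact Hab | now apply ex_RInt_gamma_integrand | eexists; exact Hprim |].
    intros x Hx. unfold gamma_integrand.
    pose proof (Rpower_le_exp_half (s - 1) x ltac:(lra) ltac:(lra)) as Hpow.
    fold K in Hpow.
    replace (K * exp (- x / 2)) with (K * exp (x / 2) * exp (- x))
      by (rewrite Rmult_assoc, <- exp_plus; f_equal; f_equal; field).
    apply Rmult_le_compat_r; [left; apply exp_pos | exact Hpow].
  - rewrite (is_RInt_unique _ _ _ _ Hprim).
    pose proof (exp_pos (- b / 2)).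
    assert (exp (- a / 2) <= 1) by (rewrite <- exp_0; apply exp_le_exp; lra).
    nra.
Qed.

Lemma RInt_gamma_integrand_le_Gamma (s a b : R) : 1 < s -> 0 < a -> a <= b ->
  RInt (gamma_integrand s) a b <= Gamma s.
Proof.
  intros Hs Ha Hab.
  destruct (nonneg_bounded_is_RInt_gen (gamma_integrand s) _
              (fun u _ => gamma_integrand_nonneg s u)
              (ex_RInt_gamma_integrand s)
              (fun a b => RInt_gamma_integrand_bounded s a b Hs)) as [l [Hl Hle]].
  replace (Gamma s) with l by (symmetry; exact (is_RInt_gen_unique _ _ Hl)).
  now apply Hle.
Qed.

Lemma exp_mul_Rpower_diff_le (s a b : R) : 0 < s -> 0 < a -> a <= b ->
  exp (- b) * (Rpower b s - Rpower a s) <= s * RInt (gamma_integrand s) a b.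
Proof.
  intros Hs Ha Hab. set (E := exp (- b)).
  assert (Hprim : is_RInt (fun u => E * (s * Rpower u (s - 1))) a b
                    (E * Rpower b s - E * Rpower a s)).
  { apply (@is_RInt_derive R_CompleteNormedModule (fun u => E * Rpower u s)).
    - intros u Hu. rewrite Rmin_left in Hu by lra. apply is_derive_scal.
      apply is_derive_Reals, derivable_pt_lim_power. lra.
    - intros u Hu. rewrite Rmin_left in Hu by lra.
      apply (continuous_mult (fun _ => E) (fun u => s * Rpower u (s - 1)));
        [apply continuous_const |].
      apply (continuous_mult (fun _ => s) (fun u => Rpower u (s - 1)));
        [apply continuous_const | apply continuous_Rpower; lra]. }
  assert (Hex : ex_RInt (gamma_integrand s) a b) by now apply ex_RInt_gamma_integrand.
  replace (E * (Rpower b s - Rpower a s))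
    with (RInt (fun u => E * (s * Rpower u (s - 1))) a b)
    by (rewrite (is_RInt_unique _ _ _ _ Hprim); symmetry; apply Rmult_minus_distr_l).
  rewrite <- (RInt_scal (V := R_CompleteNormedModule)) by exact Hex.
  apply RInt_le; [exact Hab | eexists; exact Hprim
                 | apply (ex_RInt_scal (V := R_NormedModule)); exact Hex |].
  intros u Hu. unfold gamma_integrand, scal; simpl; unfold mult; simpl.
  assert (E <= exp (- u)) by (apply exp_le_exp; lra).
  assert (0 <= s * Rpower u (s - 1)) by (unfold Rpower; pose proof (exp_pos ((s - 1) * ln u)); nra).
  nra.
Qed.

Lemma pow_one_minus_le_exp (y : R) (n : nat) : y <= 1 ->
  (1 - y) ^ n <= exp (- (y * INR n)).
Proof.
  intros Hy.
  replace (exp (- (y * INR n))) with (exp (- y) ^ n).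
  - apply pow_incr. pose proof (exp_ineq1_le (- y)). split; lra.
  - rewrite <- Rpower_pow by apply exp_pos. unfold Rpower.
    rewrite ln_exp. f_equal. ring.
Qed.

Lemma one_div_Rpower_le_1 (x y : R) : 1 <= x -> 0 <= y -> 1 / Rpower x y <= 1.
Proof.
  intros Hx Hy. pose proof (one_le_Rpower x y Hx Hy).
  unfold Rdiv. rewrite Rmult_1_l, <- Rinv_1. apply Rinv_le_contravar; lra.
Qed.

Lemma term_nonneg (alpha : R) (t : nat) : 0 < alpha -> (1 <= t)%nat -> 0 <= term alpha t.
Proof.
  intros Ha Ht. assert (Hx : 1 <= INR t) by (apply (le_INR 1); exact Ht).
  pose proof (one_div_Rpower_le_1 (INR t) alpha Hx ltac:(lra)).
  unfold term. apply pow_le. lra.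
Qed.

Lemma term_le_exp (alpha : R) (t : nat) : 0 < alpha -> (1 <= t)%nat ->
  term alpha t <= exp (- Rpower (INR t) (1 - alpha)).
Proof.
  intros Ha Ht. assert (Hx : 1 <= INR t) by (apply (le_INR 1); exact Ht).
  assert (Hexp : Rpower (INR t) (1 - alpha) = 1 / Rpower (INR t) alpha * INR t).
  { unfold Rminus. rewrite Rpower_plus, Rpower_Ropp, Rpower_1 by lra. field.
    pose proof (one_le_Rpower (INR t) alpha Hx ltac:(lra)). lra. }
  unfold term. rewrite Hexp. apply pow_one_minus_le_exp, one_div_Rpower_le_1; lra.
Qed.

Lemma term_le_RInt_gamma_integrand (alpha : R) (t : nat) :
  0 < alpha -> alpha < 1 -> (1 <= t)%nat ->
  term alpha (S t) <= / (1 - alpha) *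
    RInt (gamma_integrand (/ (1 - alpha)))
      (Rpower (INR t) (1 - alpha)) (Rpower (INR (S t)) (1 - alpha)).
Proof.
  intros Ha0 Ha1 Ht. set (s := / (1 - alpha)).
  assert (Hs : 0 < s) by (apply Rinv_0_lt_compat; lra).
  assert (Hx : 1 <= INR t) by (apply (le_INR 1); exact Ht).
  assert (Hpow_s : forall x, 0 < x -> Rpower (Rpower x (1 - alpha)) s = x).
  { intros x Hx0. rewrite Rpower_mult.
    replace ((1 - alpha) * s) with 1 by (unfold s; field; lra).
    now apply Rpower_1. }
  assert (Hlow : 1 <= Rpower (INR t) (1 - alpha)) by (apply one_le_Rpower; lra).
  assert (Hup : Rpower (INR t) (1 - alpha) <= Rpower (INR (S t)) (1 - alpha))
    by (apply Rle_Rpower_l; [lra | rewrite S_INR; split; lra]).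
  pose proof (exp_mul_Rpower_diff_le s _ _ Hs (Rlt_le_trans _ _ _ Rlt_0_1 Hlow) Hup)
    as Hslice.
  assert (Hstep : Rpower (Rpower (INR (S t)) (1 - alpha)) s
                  - Rpower (Rpower (INR t) (1 - alpha)) s = 1).
  { rewrite !Hpow_s; rewrite ?S_INR; lra. }
  rewrite Hstep, Rmult_1_r in Hslice.
  eapply Rle_trans; [apply term_le_exp; [exact Ha0 | lia] | exact Hslice].
Qed.

Lemma sum_term_le_RInt (alpha : R) (N : nat) : 0 < alpha -> alpha < 1 ->
  sum_n (fun n => term alpha (S n)) N <=
  / (1 - alpha) * RInt (gamma_integrand (/ (1 - alpha))) 1
                       (Rpower (INR (S N)) (1 - alpha)).
Proof.
  intros Ha0 Ha1.
  induction N as [| N IH].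
  - rewrite sum_O. unfold term.
    change (INR 1) with 1. rewrite !Rpower_1_l, RInt_point.
    unfold zero; simpl. lra.
  - assert (Hx : 1 <= INR (S N)) by (rewrite S_INR; pose proof (pos_INR N); lra).
    assert (Hlow : 1 <= Rpower (INR (S N)) (1 - alpha)) by (apply one_le_Rpower; lra).
    assert (Hup : Rpower (INR (S N)) (1 - alpha) <= Rpower (INR (S (S N))) (1 - alpha))
      by (apply Rle_Rpower_l; [lra | rewrite (S_INR (S N)); split; lra]).
    rewrite sum_Sn, <- (RInt_Chasles _ 1 (Rpower (INR (S N)) (1 - alpha)))
      by (apply ex_RInt_gamma_integrand; lra).
    pose proof (term_le_RInt_gamma_integrand alpha (S N) Ha0 Ha1 ltac:(lia)).
    change (plus ?u ?v) with (u + v). rewrite Rmult_plus_distr_l. lra.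
Qed.

Theorem lemma7 (alpha : R) (Ha0 : 0 < alpha) (Ha1 : alpha < 1) :
  ex_series (fun n : nat => term alpha (S n)) /\
  Series (fun n : nat => term alpha (S n))
    <= / (1 - alpha) * Gamma (/ (1 - alpha)).
Proof.
  apply nonneg_bounded_is_series.
  - intros n. apply term_nonneg; [exact Ha0 | lia].
  - intros n. eapply Rle_trans; [now apply sum_term_le_RInt |].
    apply Rmult_le_compat_l; [left; apply Rinv_0_lt_compat; lra |].
    apply RInt_gamma_integrand_le_Gamma.
    + rewrite <- Rinv_1. apply Rinv_lt_contravar; lra.
    + lra.
    + apply one_le_Rpower; [rewrite S_INR; pose proof (pos_INR n) |]; lra.
Qed.
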